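(* Assume $X_0\in L^\infty$, $x\in\mathbb{R}$, and let $z\ge\frac{x}{\mathrm{E}[\rho]}-Q_0(1)$. If $X^*$ is variance-minimal in $\mathscr{X}_{\mathrm{icx}}(x,X_0+z)$, then $\psi(X^* )=z$.
   Context: $(\Omega,\mathcal{F},\mathbb{P})$ is a complete nonatomic probability space. $\rho\in L^2$ with $\mathbb{P}(\rho>0)=1$ and $\mathrm{Var}[\rho]>0$. For a random variable $X$, $Q_X(t)=\inf\{y:\mathbb{P}(X\le y)>t\}$ for $t\in[0,1)$, $Q_X(1):=\lim_{t\uparrow1}Q_X(t)$; $Q_0:=Q_{X_0}$. For random variables $X,Y$, $X\succeq_{\mathrm{icx}}Y$ means $\mathrm{E}[f(X)]\ge\mathrm{E}[f(Y)]$ for all increasing convex $f$ (equivalently $\int_t^1Q_X\ge\int_t^1Q_Y$ for all $t\in[0,1]$). $\mathscr{X}_{\mathrm{icx}}(x,Y_0)=\{X\in L^2:\mathrm{E}[\rho X]\le x,\ X\succeq_{\mathrm{icx}}Y_0\}$, and $X$ is variance-minimal in it if it minimizes $\mathrm{Var}[X]$ over it. The beating performance of $X\in L^2$ is $\psi(X)=\sup\{m\in\mathbb{R}: X-m\succeq_{\mathrm{icx}}X_0\}$ (with $\sup\emptyset=-\infty$). *)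

From HB Require Import structures.
From mathcomp Require Import all_boot all_order all_algebra.
From mathcomp Require Import all_classical all_reals all_analysis.
Set Implicit Arguments. Unset Strict Implicit. Unset Printing Implicit Defensive.
Import Order.TTheory GRing.Theory Num.Theory.
Import numFieldNormedType.Exports.
Local Open Scope classical_set_scope.
Local Open Scope ring_scope.

Section defs.
Context {d : measure_display} {T : measurableType d} {R : realType}.
Variable P : probability T R.

Definition nonatomic : Prop :=
  forall A : set T, measurable A -> (0 < P A)%E ->
    exists B : set T, [/\ measurable B, B `<=` A, (0 < P B)%E & (P B < P A)%E].

Definition convex_fun (f : R -> R) : Prop :=
  forall (x y t : R), 0 <= t -> t <= 1 ->
    f (t * x + (1 - t) * y) <= t * f x + (1 - t) * f y.

Definition icx_ge (X Y : T -> R) : Prop :=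
  forall f : R -> R, {homo f : x y / x <= y} -> convex_fun f ->
    ('E_P[f \o Y] <= 'E_P[f \o X])%E.

Definition quantile_lt (X : T -> R) (t : R) : R :=
  inf [set y : R | (t%:E < P [set w | (X w <= y)%R])%E].

Definition quantile (X : T -> R) (t : R) : R :=
  if t < 1 then quantile_lt X t
  else lim (quantile_lt X s @[s --> 1^'-]).

Definition Xicx (rho : T -> R) (x : R) (Y : T -> R) : set (T -> R) :=
  [set X | [/\ X \in Lfun P 2%:E,
               ('E_P[fun w => (rho w * X w)%R] <= x%:E)%E & icx_ge X Y]].

Definition variance_minimal (S : set (T -> R)) (X : T -> R) : Prop :=
  S X /\ forall Y, S Y -> (variance P X <= variance P Y)%E.

(* beating performance psi(X) = sup {m : X - m >=_icx X0}, sup of empty = -oo *)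
Definition beating_perf (X0 X : T -> R) : \bar R :=
  ereal_sup [set m%:E | m in [set m : R | icx_ge (fun w => X w - m) X0]].

End defs.

(* Since X* dominates X0 + z, X* - z dominates X0 and psi X* >= z.  Conversely
   let X* - m dominate X0 with m > z, and put c = x / E[rho].  The shrunk
   variable (1 - l) X* + l c still meets the budget, and for small l > 0 it
   still dominates X0 + z because X0 is essentially bounded; as its variance
   (1 - l)^2 Var X* cannot be smaller than Var X*, X* is a.s. a constant k.
   The budget gives k <= c, and testing X* against the hinge (y - k)^+ gives
   X0 + m <= k a.s., hence m <= c - Q0(1) <= z. *)

From HB Require Import structures.
From mathcomp Require Import all_boot all_order all_algebra.
From mathcomp Require Import all_classical all_reals all_analysis.
From mathcomp Require Import measurable_realfun ess_sup_inf ring lra.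
Import Order.TTheory GRing.Theory Num.Theory.
Local Open Scope classical_set_scope.
Local Open Scope ring_scope.
Set Implicit Arguments. Unset Strict Implicit.

Section expectation_ae.
Context d (T : measurableType d) (R : realType) (P : probability T R).

Lemma Lfun_measurable (f : T -> R) p : f \in Lfun P p -> measurable_fun setT f.
Proof. by rewrite inE => /andP[/[!inE]/= mf _]. Qed.

Lemma Lfun_infty_ae_bounded (f : T -> R) : f \in Lfun P +oo%E ->
  exists M : R, {ae P, forall w, `|f w| <= M}.
Proof.
rewrite inE => /andP[_]; rewrite inE/= /finite_norm unlock /Lnorm.
rewrite (_ : (0 < P [set: T])%E = true); last by rewrite probability_setT lte01.
have := ess_sup_ge P (abse \o (EFin \o f)).
case: (ess_sup _ _) => [r| |] // fr _.
- by exists r; apply: filterS fr => w /=; rewrite lee_fin.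
- by exists 0; apply: filterS fr => w /=; rewrite leeNy_eq.
Qed.

Lemma Lfun2_Lfun1 (f : T -> R) : f \in Lfun P 2%:E -> f \in Lfun P 1.
Proof. by apply: Lfun_subset12; rewrite fin_num_measure. Qed.

Lemma ae_exists (Q : T -> Prop) : {ae P, forall w, Q w} -> exists w, Q w.
Proof.
have P0 : (0 < P [set: T])%E by rewrite probability_setT lte01.
have PF := ae_properfilter_algebraOfSetsType P0.
by move/(filter_ex_subproof (@filter_not_empty _ _ PF)).
Qed.

Lemma ae_le_expectation (f g : T -> R) :
  measurable_fun setT f -> measurable_fun setT g ->
  {ae P, forall w, f w <= g w} -> ('E_P[f] <= 'E_P[g])%E.
Proof.
move=> mf mg fg; rewrite unlock integralE [X in (_ <= X)%E]integralE.
have mf' : measurable_fun setT (EFin \o f) by exact/measurable_EFinP.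
have mg' : measurable_fun setT (EFin \o g) by exact/measurable_EFinP.
apply: leeB; apply: ae_ge0_le_integral => //;
  try exact: measurable_funepos; try exact: measurable_funeneg;
  apply: filterS fg => w fgw _.
- apply: (@funepos_le _ _ [set w] (EFin \o f) (EFin \o g)); last by rewrite inE.
  by move=> y; rewrite inE => ->; rewrite lee_fin.
- apply: (@funeneg_le _ _ [set w] (EFin \o f) (EFin \o g)); last by rewrite inE.
  by move=> y; rewrite inE => ->; rewrite lee_fin.
Qed.

Lemma ae_eq_expectation (f g : T -> R) :
  measurable_fun setT f -> measurable_fun setT g ->
  {ae P, forall w, f w = g w} -> ('E_P[f] = 'E_P[g])%E.
Proof.
move=> mf mg fg; rewrite unlock.
apply: (ae_eq_integral (EFin \o g)) => //; try exact/measurable_EFinP.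
by apply: filterS fg => w /= ->.
Qed.

Lemma ge0_expectation_eq0_ae (f : T -> R) : measurable_fun setT f ->
  (forall w, 0 <= f w) -> ('E_P[f] = 0)%E -> {ae P, forall w, f w = 0}.
Proof.
move=> mf f0 Ef0.
have mf' : measurable_fun setT (EFin \o f) by exact/measurable_EFinP.
have : (\int[P]_(w in [set: T]) `|(EFin \o f) w|)%E = 0%E.
  by rewrite -Ef0 unlock; apply: eq_integral => w _ /=; rewrite ger0_norm.
move/(ae_eq_integral_abs P measurableT mf').1.
by apply: filterS => w /(_ I) [].
Qed.

Lemma expectation_gt0_ae (f : T -> R) : measurable_fun setT f ->
  {ae P, forall w, 0 < f w} -> (0 < 'E_P[f])%E.
Proof.
move=> mf fpos; pose fp w := Num.max (f w) 0.
have mfp : measurable_fun setT fp by exact: measurable_maxr.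
have fp0 w : 0 <= fp w by rewrite le_max lexx orbT.
rewrite (@ae_eq_expectation _ fp) //; last first.
  by apply: filterS fpos => w fw; rewrite /fp max_l// ltW.
rewrite lt_neqAle expectation_ge0// andbT eq_sym; apply/negP => /eqP Efp0.
suff : {ae P, forall w, False} by case/ae_exists.
apply: filterS2 (ge0_expectation_eq0_ae mfp fp0 Efp0) fpos => w /eqP.
rewrite eq_le ge_max => /andP[/andP[fw0 _] _] fw.
by have := lt_le_trans fw fw0; rewrite ltxx.
Qed.

Lemma variance_eq0_ae (X : T -> R) : X \in Lfun P 2%:E -> 'V_P[X] = 0%E ->
  {ae P, forall w, X w = fine 'E_P[X]}.
Proof.
move=> X2; rewrite /variance covariance.unlock.
set k := fine _ => V0.
have mX := Lfun_measurable X2.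
have mY : measurable_fun setT ((X \- cst k) * (X \- cst k))%R.
  by apply: measurable_funM; apply: measurable_funB.
have Y0 w : 0 <= ((X \- cst k) * (X \- cst k))%R w by exact: sqr_ge0.
apply: filterS (ge0_expectation_eq0_ae mY Y0 V0) => w /eqP.
by rewrite !fctE mulf_eq0 orbb subr_eq0 => /eqP.
Qed.

End expectation_ae.

(* The lower bound keeps the sets in [quantile_lt] bounded below, so that
   [inf] does not return its junk value. *)
Section quantile_bound.
Context d (T : measurableType d) (R : realType) (P : probability T R).
Variables (X : T -> R) (M b : R).
Hypotheses (mX : measurable_fun setT X)
  (X_ge : {ae P, forall w, - M <= X w}) (X_le : {ae P, forall w, X w <= b}).

Let S (t : R) := [set y : R | (t%:E < P [set w | (X w <= y)%R])%E].

Let measurable_X_le (y : R) : measurable [set w | X w <= y].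
Proof. by rewrite -[X in measurable X]setTI; exact: measurable_fun_le. Qed.

Let probability_X_le_b : P [set w | X w <= b] = 1%E.
Proof.
have : P (~` [set w | X w <= b]) = 0%E.
  by apply: measure_negligible; [exact: measurableC | exact: X_le].
rewrite probability_setC//.
have := fin_num_measure P _ (measurable_X_le b).
case: (P [set w | X w <= b]) => // r _.
by rewrite -EFinB => -[/eqP]; rewrite subr_eq0 => /eqP <-.
Qed.

Let S_b (t : R) : t < 1 -> S t b.
Proof. by move=> t1; rewrite /S/= probability_X_le_b lte_fin. Qed.

Let S_lbound (t : R) : 0 <= t -> has_lbound (S t).
Proof.
move=> t0; exists (- M) => y; rewrite /S/= => Sy; rewrite leNgt; apply/negP => yM.
suff : P [set w | X w <= y] = 0%E by move=> Py0; move: Sy; rewrite Py0 lte_fin ltNge t0.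
apply: measure_negligible; first exact: measurable_X_le.
apply: negligibleS X_ge => w /= Xwy Mw.
by have := le_lt_trans Mw (le_lt_trans Xwy yM); rewrite ltxx.
Qed.

Lemma quantile_lt_le_ae (t : R) : 0 <= t -> t < 1 -> quantile_lt P X t <= b.
Proof. by move=> t0 t1; apply: ge_inf (S_lbound t0) _ (S_b t1). Qed.

Lemma quantile_lt_le_homo (s t : R) : 0 <= s -> s <= t -> t < 1 ->
  quantile_lt P X s <= quantile_lt P X t.
Proof.
move=> s0 st t1; apply: lb_le_inf; first by exists b; exact: S_b.
move=> y Sty; apply: ge_inf (S_lbound s0) _ _.
by apply: le_lt_trans Sty; rewrite lee_fin.
Qed.

Lemma quantile1_le_ae : quantile P X 1 <= b.
Proof.
rewrite /quantile ltxx; apply: limr_le.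
- apply: nondecreasing_at_left_is_cvgr.
  + near=> s => u v; rewrite !in_itv/= => /andP[su u1] /andP[sv v1] uv.
    apply: quantile_lt_le_homo => //; apply: ltW; apply: lt_trans su.
    by near: s; exact: nbhs_left_gt.
  + near=> s; exists b => y [u /=]; rewrite in_itv/= => /andP[su u1] <-.
    apply: quantile_lt_le_ae => //; apply: ltW; apply: lt_trans su.
    by near: s; exact: nbhs_left_gt.
- near=> t; apply: quantile_lt_le_ae.
  + by apply: ltW; near: t; exact: nbhs_left_gt.
  + by near: t; exact: nbhs_left_lt.
Unshelve. all: by end_near. Qed.

End quantile_bound.

Section icx.
Context d (T : measurableType d) (R : realType) (P : probability T R).
Implicit Types (X Y : T -> R) (f : R -> R).

Lemma convex_fun_comp_affine f (a b : R) :
  convex_fun f -> convex_fun (fun y => f (a * y + b)).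
Proof.
move=> cf y1 y2 t t0 t1.
have -> : a * (t * y1 + (1 - t) * y2) + b = t * (a * y1 + b) + (1 - t) * (a * y2 + b).
  by ring.
exact: cf.
Qed.

Lemma icx_ge_affine X Y (a b : R) : 0 <= a ->
  icx_ge P X Y -> icx_ge P (fun w => a * X w + b) (fun w => a * Y w + b).
Proof.
move=> a0 XY f hf cf; apply: (XY (fun y => f (a * y + b))).
- by move=> y1 y2 y12; apply: hf; rewrite lerD2r ler_wpM2l.
- exact: convex_fun_comp_affine.
Qed.

Lemma icx_ge_shift X Y (b : R) :
  icx_ge P X Y -> icx_ge P (fun w => X w + b) (fun w => Y w + b).
Proof.
move/(icx_ge_affine b ler01).
by under eq_fun do rewrite mul1r; under [in X in icx_ge _ _ X]eq_fun do rewrite mul1r.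
Qed.

Lemma icx_ge_ae_le X Y Y' :
  measurable_fun setT Y -> measurable_fun setT Y' ->
  {ae P, forall w, Y' w <= Y w} -> icx_ge P X Y -> icx_ge P X Y'.
Proof.
move=> mY mY' Y'Y XY f hf cf; apply: le_trans (XY f hf cf).
have mf : measurable_fun setT f by exact: nondecreasing_measurable.
apply: ae_le_expectation; try exact: measurableT_comp.
by apply: filterS Y'Y => w; exact: hf.
Qed.

Lemma homo_hinge (k : R) : {homo (fun y : R => Num.max (y - k) 0) : y1 y2 / y1 <= y2}.
Proof. by move=> y1 y2 y12; rewrite ge_max !le_max lexx !orbT andbT lerD2r y12. Qed.

Lemma convex_fun_hinge (k : R) : convex_fun (fun y : R => Num.max (y - k) 0).
Proof.
move=> y1 y2 t t0 t1.
have h1 : y1 - k <= Num.max (y1 - k) 0 by rewrite le_max lexx.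
have h2 : y2 - k <= Num.max (y2 - k) 0 by rewrite le_max lexx.
have h3 : 0 <= Num.max (y1 - k) 0 by rewrite le_max lexx orbT.
have h4 : 0 <= Num.max (y2 - k) 0 by rewrite le_max lexx orbT.
by rewrite ge_max; apply/andP; split; nra.
Qed.

Lemma icx_ge_ae_cst X Y (k : R) :
  measurable_fun setT X -> measurable_fun setT Y ->
  {ae P, forall w, X w = k} -> icx_ge P X Y -> {ae P, forall w, Y w <= k}.
Proof.
move=> mX mY Xk XY; pose h y := Num.max (y - k) 0.
have h0 y : 0 <= h y by rewrite le_max lexx orbT.
have mh : measurable_fun setT h := nondecreasing_measurable measurableT (@homo_hinge k).
have EhX : ('E_P[h \o X] = 0)%E.
  rewrite (@ae_eq_expectation _ _ _ _ _ (cst 0)) ?expectation_cst//.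
  - exact: measurableT_comp.
  - by apply: filterS Xk => w /= ->; rewrite /h subrr maxxx.
have EhY : ('E_P[h \o Y] = 0)%E.
  apply/eqP; rewrite eq_le (expectation_ge0 P (fun w => h0 (Y w))) andbT.
  by rewrite -EhX; exact: XY (@homo_hinge k) (@convex_fun_hinge k).
apply: filterS (ge0_expectation_eq0_ae (measurableT_comp mh mY) (fun w => h0 _) EhY).
by move=> w /eqP; rewrite eq_le ge_max subr_le0 => /andP[/andP[]].
Qed.

End icx.

Section shrink.
Context d (T : measurableType d) (R : realType) (P : probability T R).

Lemma affine_funE (X : T -> R) (a b : R) :
  (fun w => a * X w + b) = (a \o* X \+ cst b)%R.
Proof. by apply/funext => w; rewrite /= mulrC. Qed.

Lemma Lfun_affine (X : T -> R) (a b r : R) : 1 <= r ->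
  X \in Lfun P r%:E -> (fun w => a * X w + b) \in Lfun P r%:E.
Proof.
move=> r1 Xr; rewrite affine_funE.
by apply: rpredD; [exact: Lfun_scale | exact: Lfun_cst].
Qed.

Lemma variance_affine (X : T -> R) (a b : R) : X \in Lfun P 2%:E ->
  'V_P[fun w => a * X w + b] = ((a ^+ 2)%:E * 'V_P[X])%E.
Proof.
move=> X2; rewrite affine_funE varianceD_cst_r ?varianceZ//.
by apply: Lfun_scale; rewrite ?ler1n.
Qed.

Lemma exists_shrink (a b : R) : 0 < b -> exists2 l : R, 0 < l <= 1 & l * a <= b.
Proof.
move=> b0; have a1 : 0 < `|a| + 1 by rewrite ltr_wpDl.
pose l := Num.min 1 (b / (`|a| + 1)).
have ll : l <= b / (`|a| + 1) by rewrite /l ge_min lexx orbT.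
have lab : b / (`|a| + 1) * (`|a| + 1) = b by rewrite divfK ?gt_eqF.
exists l; first by rewrite lt_min ltr01 divr_gt0 ?ge_min ?lexx.
have := ler_norm a; have : 0 < l by rewrite lt_min ltr01 divr_gt0.
by nra.
Qed.

Lemma variance_minimal_shrink_eq0 (S : set (T -> R)) (X : T -> R) (l c : R) :
  X \in Lfun P 2%:E -> 0 < l <= 1 -> variance_minimal P S X ->
  S (fun w => (1 - l) * X w + l * c) -> 'V_P[X] = 0%E.
Proof.
move=> X2 /andP[l0 l1] [_ minX] /minX; rewrite variance_affine//.
have := variance_ge0 P X; have := variance_fin_num X2.
case: 'V_P[X] => // v _; rewrite -EFinM !lee_fin => v0 vle.
have : (1 - l) ^+ 2 < 1 by rewrite expr2; nra.
by move=> l2; apply/eqP; rewrite eqe; apply/eqP; nra.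
Qed.

Lemma expectation_mul_shrink_le (rho X : T -> R) (e x l : R) :
  rho \in Lfun P 1 -> (rho \* X)%R \in Lfun P 1 ->
  ('E_P[rho] = e%:E)%E -> e != 0 -> l <= 1 ->
  ('E_P[rho \* X] <= x%:E)%E ->
  ('E_P[fun w => (rho w * ((1 - l) * X w + l * (x / e)))%R] <= x%:E)%E.
Proof.
move=> rho1 rhoX1 Ee e0 l1.
have -> : (fun w => rho w * ((1 - l) * X w + l * (x / e))) =
    ((1 - l) \o* (rho \* X) \+ (l * (x / e)) \o* rho)%R.
  by apply/funext => w /=; ring.
rewrite expectationD ?expectationZl ?Ee //; try exact: Lfun_scale.
have := expectation_fin_num rhoX1; case: ('E_P[_])%E => // r _.
rewrite -!EFinM -EFinD !lee_fin -mulrA divfK// => rx.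
by have := ler_wpM2l (_ : 0 <= 1 - l) rx; lra.
Qed.

Lemma icx_ge_shrink (X Y : T -> R) (m z c M l : R) :
  measurable_fun setT Y -> {ae P, forall w, Y w <= M} ->
  0 <= l <= 1 -> l * (M + m - c) <= m - z ->
  icx_ge P X (fun w => Y w + m) ->
  icx_ge P (fun w => (1 - l) * X w + l * c) (fun w => Y w + z).
Proof.
move=> mY YM /andP[l0 l1] lmz /(icx_ge_affine (l * c) (_ : 0 <= 1 - l)) XYm.
apply: icx_ge_ae_le (XYm _); last by lra.
- exact: measurable_funD (measurable_funM (measurable_cst _)
    (measurable_funD mY (measurable_cst _))) (measurable_cst _).
- exact: measurable_funD mY (measurable_cst _).
- by apply: filterS YM => w YwM; nra.
Qed.

Lemma ae_cst_budget_le (rho X : T -> R) (e x k : R) :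
  rho \in Lfun P 1 -> measurable_fun setT X -> {ae P, forall w, X w = k} ->
  ('E_P[rho] = e%:E)%E -> 0 < e -> ('E_P[rho \* X] <= x%:E)%E -> k <= x / e.
Proof.
move=> rho1 mX Xk Ee e0; rewrite ler_pdivlMr//.
have mrho := Lfun_measurable rho1.
rewrite (@ae_eq_expectation _ _ _ _ _ (k \o* rho)%R).
- by rewrite expectationZl// Ee -EFinM lee_fin.
- exact: measurable_funM.
- exact: measurable_funM.
- by apply: filterS Xk => w /= ->; rewrite mulrC.
Qed.

Lemma variance_minimal_Xicx_eq0 (rho X0 Xs : T -> R) (e x z m M : R) :
  rho \in Lfun P 2%:E -> ('E_P[rho] = e%:E)%E -> 0 < e ->
  measurable_fun setT X0 -> {ae P, forall w, X0 w <= M} -> z < m ->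
  variance_minimal P (Xicx P rho x (fun w => X0 w + z)) Xs ->
  icx_ge P Xs (fun w => X0 w + m) -> 'V_P[Xs] = 0%E.
Proof.
move=> rho2 Ee e0 mX0 X0M zm Xs_min Xs_m.
have [[Xs2 Xs_budget _] _] := Xs_min.
have mz0 : 0 < m - z by rewrite subr_gt0.
have [l /andP[l0 l1] lmz] := exists_shrink (M + m - x / e) mz0.
apply: (variance_minimal_shrink_eq0 (l := l) Xs2 _ Xs_min); first by rewrite l0 l1.
split.
- by apply: Lfun_affine; rewrite ?ler1n.
- apply: expectation_mul_shrink_le (Lfun2_Lfun1 rho2) (Lfun2_mul_Lfun1 rho2 Xs2) Ee _ l1
    Xs_budget.
  by rewrite gt_eqF.
- by apply: icx_ge_shrink mX0 X0M _ lmz Xs_m; rewrite (ltW l0) l1.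
Qed.

End shrink.

Lemma variance_minimal_icx_shift_le d (T : measurableType d) (R : realType)
    (P : probability T R) (rho X0 Xs : T -> R) (x z m : R) :
  rho \in Lfun P 2%:E -> {ae P, forall w, 0 < rho w} -> X0 \in Lfun P +oo%E ->
  x / fine 'E_P[rho] - quantile P X0 1 <= z ->
  variance_minimal P (Xicx P rho x (fun w => X0 w + z)) Xs ->
  icx_ge P (fun w => Xs w - m) X0 -> m <= z.
Proof.
move=> rho2 rho_pos X0_Linf hz Xs_min Xs_m; case: (leP m z) => // zm.
have [[Xs2 Xs_budget _] _] := Xs_min.
have mrho := Lfun_measurable rho2; have mX0 := Lfun_measurable X0_Linf.
have mXs := Lfun_measurable Xs2.
set e := fine 'E_P[rho] in hz.
have Ee : ('E_P[rho] = e%:E)%E by rewrite fineK// expectation_fin_num// Lfun2_Lfun1.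
have e0 : 0 < e by rewrite -lte_fin -Ee expectation_gt0_ae.
have [M X0M] := Lfun_infty_ae_bounded X0_Linf.
have X0_le : {ae P, forall w, X0 w <= M}.
  by apply: filterS X0M => w; rewrite ler_norml => /andP[].
have X0_ge : {ae P, forall w, - M <= X0 w}.
  by apply: filterS X0M => w; rewrite ler_norml => /andP[].
have Xs_X0m : icx_ge P Xs (fun w => X0 w + m).
  by move/(icx_ge_shift m): Xs_m; under eq_fun do rewrite subrK.
have := variance_minimal_Xicx_eq0 rho2 Ee e0 mX0 X0_le zm Xs_min Xs_X0m.
move=> /(variance_eq0_ae Xs2); set k := fine _ => Xs_k.
have kc : k <= x / e := ae_cst_budget_le (Lfun2_Lfun1 rho2) mXs Xs_k Ee e0 Xs_budget.
have X0_k : {ae P, forall w, X0 w + m <= k}.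
  exact: icx_ge_ae_cst mXs (measurable_funD mX0 (measurable_cst _)) Xs_k Xs_X0m.
have : quantile P X0 1 <= k - m.
  apply: quantile1_le_ae X0_ge _ => //.
  by apply: filterS X0_k => w; rewrite lerBrDr.
by lra.
Qed.

Theorem proposition8p2 (d : measure_display) (T : measurableType d)
  (R : realType) (P : probability T R)
  (P_complete : measure_is_complete P) (P_nonatomic : nonatomic P)
  (rho : T -> R) (rho_L2 : rho \in Lfun P 2%:E)
  (rho_pos : {ae P, forall w, 0 < rho w})
  (rho_var : (0 < variance P rho)%E)
  (X0 : T -> R) (X0_Linf : X0 \in Lfun P +oo%E)
  (x z : R) (hz : x / fine 'E_P[rho] - quantile P X0 1 <= z)
  (Xs : T -> R)
  (hXs : variance_minimal P (Xicx P rho x (fun w => X0 w + z)) Xs) :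
  beating_perf P X0 Xs = z%:E.
Proof.
apply/le_anti/andP; split.
- apply: ge_ereal_sup => _ [m Xs_m <-]; rewrite lee_fin.
  exact: variance_minimal_icx_shift_le rho_L2 rho_pos X0_Linf hz hXs Xs_m.
- apply: ereal_sup_ubound; exists z => //=.
  have [[_ _ /(icx_ge_shift (- z))]] := hXs.
  by under [in X in icx_ge _ _ X -> _]eq_fun do rewrite addrK.
Qed.
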